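(* Let $C\subset\mathbb{R}^2$ be a strictly convex body and $S\subset\mathbb{R}^2$ a finite point set in $C$-general position. Let $C'$ be a homothet of $C$ whose boundary contains exactly two points $p,q$ of $S$. Then $p$ and $q$ are joined by a path in $D_C(S)$ (with edges drawn as straight segments) that lies entirely in $C'$.
   Context: A convex body is a convex compact set with nonempty interior; it is strictly convex if its boundary contains no segment of positive length. A homothet of $C$ is $\lambda C+x$ with $\lambda>0$. $S$ is in $C$-general position if the boundary of every homothet of $C$ contains at most $4$ points of $S$. The Delaunay graph $D_C(S)$ has vertex set $S$, with $p,q$ adjacent iff some homothet of $C$ contains $p$ and $q$ and no other point of $S$. *)

From HB Require Import structures.
From mathcomp Require Import all_boot all_order all_algebra.
From mathcomp Require Import all_classical all_reals all_analysis.
Set Implicit Arguments. Unset Strict Implicit. Unset Printing Implicit Defensive.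
Import Order.TTheory GRing.Theory Num.Theory.
Import numFieldNormedType.Exports.
Local Open Scope classical_set_scope.
Local Open Scope ring_scope.

Notation pt R := (R * R)%type.
Section Defs.
Variable R : realType.
Local Notation pt := (R * R)%type.

Definition padd (a b : pt) : pt := (a.1 + b.1, a.2 + b.2).
Definition pscale (l : R) (a : pt) : pt := (l * a.1, l * a.2).

Definition segment (a b : pt) : set pt :=
  [set x | exists t : R, 0 <= t <= 1 /\ x = padd (pscale t a) (pscale (1 - t) b)].

Definition convex_set (A : set pt) : Prop :=
  forall a b, A a -> A b -> segment a b `<=` A.

Definition convex_body (C : set pt) : Prop :=
  [/\ convex_set C, compact C & interior C !=set0].

Definition boundary (A : set pt) : set pt := closure A `\` interior A.

Definition strictly_convex_body (C : set pt) : Prop :=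
  convex_body C /\
  forall a b : pt, a <> b -> ~ (segment a b `<=` boundary C).

Definition homothet (C : set pt) (lam : R) (x : pt) : set pt :=
  [set padd (pscale lam c) x | c in C].

Definition general_position (C : set pt) (S : seq pt) : Prop :=
  forall (lam : R) (x : pt), 0 < lam ->
    (size [seq p <- S | `[< boundary (homothet C lam x) p >]] <= 4)%N.

Definition delaunay_adj (C : set pt) (S : seq pt) (p q : pt) : Prop :=
  [/\ p \in S, q \in S, p <> q &
   exists (lam : R) (x : pt), 0 < lam /\
     homothet C lam x p /\ homothet C lam x q /\
     forall r, r \in S -> homothet C lam x r -> r = p \/ r = q].
End Defs.

From Pilot Require Import Defs.
From HB Require Import structures.
From mathcomp Require Import all_boot all_order all_algebra.
From mathcomp Require Import all_classical all_reals all_analysis.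
From mathcomp Require Import ring lra.
From Stdlib Require Import Relation_Operators Operators_Properties.
Import Order.TTheory GRing.Theory Num.Theory.
Import numFieldNormedType.Exports.
Local Open Scope classical_set_scope.
Local Open Scope ring_scope.

(* Induction on the number of points of S inside a homothet K of C whose points
   of S all lie in C'.  If K contains only two points of S, K itself witnesses
   that they are Delaunay neighbours, and their segment lies in the convex set C'.
   Otherwise, for any u in S inside K, some homothet of C contains exactly the
   points of S inside K except one point x <> u.  Removing a point x1 <> a and
   then a point x2 <> x1 gives two smaller homothets, connected by induction,
   that share a third point and together cover the points of S inside K. *)

Lemma count_lt_remove (T : eqType) (a b : pred T) (s : seq T) x :
  {in s, forall y, b y = a y && (y != x)} -> x \in s -> a x -> (count b s < count a s)%N.
Proof.
move=> bE xs ax; rewrite -[count a s]size_filter -(count_predC (predC1 x)) count_filter.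
have -> : count (predI (predC1 x) a) s = count b s.
  by apply: eq_in_count => y /bE ->; rewrite andbC.
rewrite -{1}[count b s]addn0 ltn_add2l -has_count; apply/hasP.
by exists x; rewrite ?mem_filter ?ax //= eqxx.
Qed.

Lemma exists_avoid2 {T : eqType} {A : set T} {a b c} x1 x2 : A a -> A b -> A c ->
  a <> b -> a <> c -> b <> c -> exists2 w, A w & w <> x1 /\ w <> x2.
Proof.
move=> Aa Ab Ac /eqP ab /eqP ac /eqP bc.
suff [w Aw /andP[/eqP wx1 /eqP wx2]] : exists2 w, A w & (w != x1) && (w != x2) by exists w.
have [wa|] := boolP ((a != x1) && (a != x2)); first by exists a.
have [wb|] := boolP ((b != x1) && (b != x2)); first by exists b.
rewrite !negb_and !negbK => /orP[]/eqP<- /orP[]/eqP ax; exists c => //;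
  by [move: ab; rewrite ax eqxx | rewrite -ax !(eq_sym c) ac bc].
Qed.

Definition rt_connected {T} (e : T -> T -> Prop) (A : set T) :=
  forall a b, A a -> A b -> clos_refl_trans T e a b.

Lemma rt_connected_cover {T} {e : T -> T -> Prop} {A A1 A2 : set T} {x1 x2 w : T} :
  (forall p, A p -> p <> x1 -> A1 p) -> (forall p, A p -> p <> x2 -> A2 p) ->
  x1 <> x2 -> A w -> w <> x1 -> w <> x2 ->
  rt_connected e A1 -> rt_connected e A2 -> rt_connected e A.
Proof.
move=> A1A A2A x12 Aw wx1 wx2 conn1 conn2.
have hub p : A p -> clos_refl_trans T e p w /\ clos_refl_trans T e w p.
  move=> Ap; have [px1|px1] := pselect (p = x1).
    have px2 : p <> x2 by rewrite px1.
    by split; apply: conn2; apply: A2A.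
  by split; apply: conn1; apply: A1A.
by move=> a b Aa Ab; apply: rt_trans (hub a Aa).1 (hub b Ab).2.
Qed.

Lemma clos_refl_trans_path {T} {e : T -> T -> Prop} {a b : T} : clos_refl_trans T e a b ->
  exists vs, last a vs = b /\
    forall i, (i < size vs)%N -> e (nth a (a :: vs) i) (nth a (a :: vs) i.+1).
Proof.
move=> rt; elim: (clos_rt_rt1n _ _ _ _ rt) => [c|c d f cd _ [vs [lvs evs]]].
  by exists [::].
exists (d :: vs); split => // -[|i] //= ilt.
by rewrite !(set_nth_default d) //= ?ltnS 1?ltnW //; apply: evs.
Qed.

Lemma filter_forall_seq {T : Type} {U : eqType} {F : set_system T} {FF : Filter F}
    {S : seq U} {A : U -> Prop} {Q : U -> T -> Prop} :
  (forall s, s \in S -> A s -> \forall t \near F, Q s t) ->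
  \forall t \near F, forall s, s \in S -> A s -> Q s t.
Proof.
elim: S => [|s S IH] QS; first by apply: filterE => t s; rewrite in_nil.
have Qs : \forall t \near F, A s -> Q s t.
  have [As|nAs] := pselect (A s); last by apply: filterE => t /nAs.
  by move: (QS s (mem_head s S) As); apply: filterS => t Qst _.
have QS' s' : s' \in S -> A s' -> \forall t \near F, Q s' t.
  by move=> s'S; apply: QS; rewrite in_cons s'S orbT.
apply: filterS2 Qs (IH QS') => t Qst QSt s'.
by rewrite in_cons => /predU1P[->|/QSt].
Qed.

Section Homothety.
Context {R : realType}.
Local Notation P := (pt R).
Implicit Types (K : set P) (a b k w z : P) (t r : R).

Lemma pt_ext (u v : P) : u.1 = v.1 -> u.2 = v.2 -> u = v.
Proof. by case: u v => ? ? [? ?] /= -> ->. Qed.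

Lemma scaleRE (s t : R) : s *: t = s * t. Proof. by []. Qed.

Local Ltac pt_field := apply: pt_ext => /=; rewrite ?scaleRE; field.

Lemma segmentE a b :
  segment a b = [set v | exists t, 0 <= t <= 1 /\ v = t *: a + (1 - t) *: b].
Proof. by []. Qed.

Lemma homothetE K t w : homothet K t w = [set t *: c + w | c in K].
Proof. by []. Qed.

Lemma homothetP K t w k : t != 0 -> homothet K t w k <-> K (t^-1 *: (k - w)).
Proof.
rewrite homothetE => t0; split => [[c Kc <-]|Kk]; first by rewrite addrK scalerK.
by exists (t^-1 *: (k - w)) => //; rewrite scalerKV // subrK.
Qed.

Lemma homothet_comp K r z t w :
  homothet (homothet K r z) t w = homothet K (t * r) (t *: z + w).
Proof.
rewrite !homothetE image_comp; congr image; apply/funext => k /=.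
by rewrite scalerDr scalerA addrA.
Qed.

Lemma homothet1 K : homothet K 1 0 = K.
Proof.
rewrite homothetE (_ : (fun c => _) = id) ?image_id //.
by apply/funext => k; rewrite scale1r addr0.
Qed.

Lemma compact_homothet K t w : compact K -> compact (homothet K t w).
Proof.
move=> cK; rewrite homothetE; apply: continuous_compact => //.
apply: continuous_subspaceT => k; apply: continuousD; last exact: cst_continuous.
exact: continuousZl_tmp.
Qed.

Lemma interior_homothet K t w k : 0 < t -> K° k -> (homothet K t w)° (t *: k + w).
Proof.
move=> t0 /nbhs_ballP[e e0 ballK]; apply/nbhs_ballP; exists (t * e); first exact: mulr_gt0.
move=> v; rewrite -ball_normE /= => tv; apply/homothetP; first by rewrite gt_eqF.
apply: ballK; rewrite -ball_normE /=.
have -> : k - t^-1 *: (v - w) = t^-1 *: (t *: k + w - v).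
  by rewrite -{1}(scalerK (lt0r_neq0 t0) k) -scalerBr opprB addrA.
by rewrite normrZ gtr0_norm ?invr_gt0 // ltr_pdivrMl.
Qed.

(* The image of K under the homothety of centre z and ratio r. *)
Definition dilation z r K := homothet K r ((1 - r) *: z).

Lemma dilationP z r K k : r != 0 -> dilation z r K k <-> K (z + r^-1 *: (k - z)).
Proof.
move=> r0; rewrite /dilation homothetP //.
suff -> : r^-1 *: (k - (1 - r) *: z) = z + r^-1 *: (k - z) by [].
by rewrite scalerBl scale1r opprB addrCA scalerDr scalerA mulVf // scale1r addrC.
Qed.

Lemma dilation_comp z r t K : dilation z r (dilation z t K) = dilation z (r * t) K.
Proof.
rewrite /dilation homothet_comp scalerA -scalerDl; congr (homothet _ _ (_ *: _)).
by ring.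
Qed.

Lemma dilation1 z K : dilation z 1 K = K.
Proof. by rewrite /dilation subrr scale0r homothet1. Qed.

Lemma dilation_center z r K : K z -> dilation z r K z.
Proof.
move=> Kz; rewrite /dilation homothetE; exists z => //.
by rewrite -scalerDl addrC subrK scale1r.
Qed.

Lemma dilation_sub {z r K} : Defs.convex_set K -> K z -> 0 <= r <= 1 ->
  dilation z r K `<=` K.
Proof.
rewrite /dilation homothetE => convK Kz r01 _ [c Kc <-].
by apply: (convK c z Kc Kz); rewrite segmentE; exists r.
Qed.

Lemma dilation_norm_le K u t k (M : R) : (forall c, K c -> `|c - u| <= M) -> 0 <= t ->
  dilation u t K k -> `|k - u| <= t * M.
Proof.
rewrite /dilation homothetE => KM t0 [c Kc <-].
have -> : t *: c + (1 - t) *: u - u = t *: (c - u) by pt_field.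
by rewrite normrZ ger0_norm // ler_wpM2l // KM.
Qed.

Lemma interior_dilation_center {K z t} : 0 < t -> (dilation z t K)° z -> K° z.
Proof.
move=> t0 zint.
have := @interior_homothet (dilation z t K) t^-1 ((1 - t^-1) *: z) z.
rewrite invr_gt0 => /(_ t0 zint).
rewrite -/(dilation z t^-1 _) dilation_comp mulVf ?lt0r_neq0 // dilation1.
by rewrite -scalerDl addrC subrK scale1r.
Qed.

Lemma interior_segment K v y s : Defs.convex_set K -> K° v -> K y -> 0 < s <= 1 ->
  K° (s *: v + (1 - s) *: y).
Proof.
move=> cK /nbhs_ballP[e e0 ballK] Ky /andP[s0 s1].
apply/nbhs_ballP; exists (s * e); first exact: mulr_gt0.
move=> u; rewrite -ball_normE /= => su.
have Kc : K (s^-1 *: (u - (1 - s) *: y)).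
  apply: ballK; rewrite -ball_normE /=.
  have -> : v - s^-1 *: (u - (1 - s) *: y) = s^-1 *: (s *: v + (1 - s) *: y - u).
    rewrite -{1}(scalerK (lt0r_neq0 s0) v) -scalerBr; congr (_ *: _).
    by rewrite opprB addrA addrAC.
  by rewrite normrZ gtr0_norm ?invr_gt0 // ltr_pdivrMl.
apply: (cK _ _ Kc Ky); rewrite segmentE; exists s; split; first by rewrite (ltW s0).
by rewrite scalerKV ?lt0r_neq0 // subrK.
Qed.

Definition strictly_convex_set K := forall a b t,
  K a -> K b -> a <> b -> 0 < t < 1 -> K° (t *: a + (1 - t) *: b).

Lemma strictly_convex_convex {K} : strictly_convex_set K -> Defs.convex_set K.
Proof.
move=> sK a b Ka Kb v; rewrite segmentE => -[t [/andP[t0 t1] ->]].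
have [->|ab] := pselect (a = b); first by rewrite -scalerDl addrC subrK scale1r.
have [->|t_neq0] := eqVneq t 0; first by rewrite scale0r add0r subr0 scale1r.
have [->|t_neq1] := eqVneq t 1; first by rewrite subrr scale0r addr0 scale1r.
apply: interior_subset; apply: sK => //.
by rewrite lt0r t_neq0 t0 lt_neqAle t_neq1 t1.
Qed.

Lemma strictly_convex_homothet K t w :
  0 < t -> strictly_convex_set K -> strictly_convex_set (homothet K t w).
Proof.
rewrite homothetE => t0 sK _ _ s [a Ka <-] [b Kb <-] ab s01.
have -> : s *: (t *: a + w) + (1 - s) *: (t *: b + w) = t *: (s *: a + (1 - s) *: b) + w.
  by pt_field.
by apply: interior_homothet => //; apply: sK => // eab; apply: ab; rewrite eab.
Qed.

Lemma interior_dilation {K z r s} : strictly_convex_set K -> K z -> 0 < r < 1 ->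
  dilation z r K s -> s <> z -> K° s.
Proof.
rewrite /dilation homothetE => sK Kz r01 [c Kc <-] sz.
by apply: sK => // cz; apply: sz; rewrite cz -scalerDl addrC subrK scale1r.
Qed.

(* Some point of the segment is off the boundary, hence interior; from an
   interior point, convexity puts the rest of the open segment in the interior. *)
Lemma strictly_convex_body_set {C} : strictly_convex_body C -> strictly_convex_set C.
Proof.
case=> -[cC _ _] sC a b t Ca Cb ab /andP[t0 t1].
have [v [segv bv]] : exists v, segment a b v /\ ~ boundary C v.
  apply: contra_notP (sC a b ab) => nv v segv.
  by apply: contrapT => bv; apply: nv; exists v.
have Cv : C v by apply: (cC a b).
have vint : C° v.
  by apply: contrapT => nvint; apply: bv; split => //; apply: subset_closure.
move: segv; rewrite segmentE => -[s [/andP[s0 s1] ev]].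
have [ts|st] := leP t s.
- have s_gt0 : 0 < s by apply: lt_le_trans ts.
  have := @interior_segment C v b (t / s) cC vint Cb.
  rewrite divr_gt0 // ler_pdivrMr // mul1r ts => /(_ isT).
  suff -> : t / s *: v + (1 - t / s) *: b = t *: a + (1 - t) *: b by [].
  by rewrite ev; pt_field; rewrite lt0r_neq0.
- have s_lt1 : 0 < 1 - s by rewrite subr_gt0 (lt_trans st).
  have := @interior_segment C v a ((1 - t) / (1 - s)) cC vint Ca.
  have -> : 0 < (1 - t) / (1 - s) <= 1.
    by apply/andP; split; [apply: divr_gt0; lra | rewrite ler_pdivrMr // mul1r; lra].
  move=> /(_ isT).
  suff -> : (1 - t) / (1 - s) *: v + (1 - (1 - t) / (1 - s)) *: a = t *: a + (1 - t) *: b.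
    by [].
  by rewrite ev; pt_field; rewrite lt0r_neq0.
Qed.

Lemma near_dilation (A : set P) z k r0 : r0 != 0 ->
  nbhs (z + r0^-1 *: (k - z)) A -> \forall r \near r0, A (z + r^-1 *: (k - z)).
Proof.
move=> r00; have f_cont : {for r0, continuous (fun r : R => z + r^-1 *: (k - z))}.
  apply: continuousD; first exact: cst_continuous.
  by apply: continuousZr_tmp; apply: inv_continuous.
by move=> Ak; apply: f_cont.
Qed.

Lemma near1_neq0 : \forall r \near (1 : R), r != 0.
Proof.
apply/nbhs_ballP; exists 1; first exact: ltr01.
move=> r; rewrite -ball_normE /= => r1.
by apply: contraTneq r1 => ->; rewrite subr0 normr1 ltxx.
Qed.

Lemma near1_dilation_interior K z k : K° k -> \forall r \near (1 : R), dilation z r K k.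
Proof.
move=> Kk; have := @near_dilation K z k 1 (oner_neq0 R).
rewrite invr1 scale1r addrC subrK => /(_ Kk) nearK.
near=> r; apply/dilationP; last by near: r.
by near: r; exact: near1_neq0.
Unshelve. all: by end_near.
Qed.

Lemma near1_dilation_closed K z k : closed K -> ~ K k ->
  \forall r \near (1 : R), ~ dilation z r K k.
Proof.
move=> cK nKk; have := @near_dilation (~` K) z k 1 (oner_neq0 R).
rewrite invr1 scale1r addrC subrK => /(_ (open_nbhs_nbhs (conj (closed_openC cK) nKk))).
move=> nearK; near=> r; rewrite dilationP; first by near: r.
by near: r; exact: near1_neq0.
Unshelve. all: by end_near.
Qed.

Lemma near1_below {Q : R -> Prop} :
  (\forall r \near (1 : R), Q r) -> exists2 r, 0 < r < 1 & Q r.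
Proof.
move=> /nbhs_ballP[e e0 ballQ]; set d := Num.min e 1.
have d0 : 0 < d by rewrite lt_min e0 ltr01.
have [de d1] : d <= e /\ d <= 1 by rewrite !ge_min !lexx orbT.
clearbody d; exists (1 - d / 2); first by apply/andP; split; lra.
by apply: ballQ; rewrite -ball_normE /= opprB addrC subrK ger0_norm; lra.
Qed.

Lemma near1_above {Q : R -> Prop} :
  (\forall r \near (1 : R), Q r) -> exists2 r, 1 < r & Q r.
Proof.
move=> /nbhs_ballP[e /= e0 ballQ]; exists (1 + e / 2); first lra.
by apply: ballQ; rewrite -ball_normE /= opprD addNKr normrN ger0_norm; lra.
Qed.

(* m is the least ratio of a dilation about u that keeps every point of S
   inside K; at that ratio some point x <> u has reached the boundary. *)
Section ShrinkToBoundary.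
Context {K : set P} {S : seq P} {u s0 : P}.
Hypotheses (cK : compact K) (Ku : K u) (s0S : s0 \in S) (Ks0 : K s0) (s0u : s0 <> u).

Local Notation E := [set t : R | 0 < t <= 1 /\ forall s, s \in S -> K s -> dilation u t K s].
Local Notation m := (inf E).

Let E1 : E 1.
Proof. by rewrite /=; split=> [|s _ Ks]; rewrite ?dilation1 // ltr01 lexx. Qed.

Let E_lbound : has_lbound E.
Proof. by exists 0 => t /= [/andP[t0 _] _]; apply: ltW. Qed.

Let m_gt0 : 0 < m.
Proof.
have := compact_bounded cK; case=> M [_ KM].
have KD c : K c -> `|c - u| <= 2 * (M + 1).
  move=> Kc; have := KM (M + 1); rewrite ltrDl ltr01 => /(_ isT) KM1.
  by have := ler_normB c u; have /= := KM1 _ Kc; have /= := KM1 _ Ku; lra.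
have su_gt0 : 0 < `|s0 - u| by rewrite normr_gt0 subr_eq0; apply/eqP.
have D_gt0 : 0 < 2 * (M + 1) := lt_le_trans su_gt0 (KD _ Ks0).
apply: lt_le_trans (divr_gt0 su_gt0 D_gt0) (lb_le_inf (ex_intro _ 1 E1) _).
move=> t /= [/andP[t0 _] keeps_t]; rewrite ler_pdivrMr //.
exact: dilation_norm_le KD (ltW t0) (keeps_t _ s0S Ks0).
Qed.

Let m_le1 : m <= 1. Proof. by have := ge_inf E_lbound E1. Qed.

Let keeps_m s : s \in S -> K s -> dilation u m K s.
Proof.
move=> sS Ks; apply: contrapT => nm; have m_neq0 := lt0r_neq0 m_gt0.
have : \forall t \near m, ~ K (u + t^-1 *: (s - u)).
  apply: (@near_dilation (~` K) _ _ _ m_neq0); apply: open_nbhs_nbhs; split.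
    exact/closed_openC/(compact_closed (@norm_hausdorff _ _) cK).
  by move=> Km; apply: nm; apply/(dilationP _ _ _ _ m_neq0).
move=> /nbhs_ballP[e /= e0 ballE].
have [t [t01 keeps_t] tm] := inf_adherent e0 (conj (ex_intro _ 1 E1) E_lbound).
have mt : m <= t by have := ge_inf E_lbound (conj t01 keeps_t).
apply: (ballE t); last first.
  by apply/dilationP; [rewrite lt0r_neq0 //; case/andP: t01 | exact: keeps_t].
by rewrite -ball_normE /= ler0_norm ?subr_le0 //; lra.
Qed.

Let boundary_point : exists x, [/\ x \in S, K x, x <> u & ~ (dilation u m K)° x].
Proof.
apply: contrapT => nx.
have near_keeps s : s \in S -> K s /\ s <> u ->
    \forall r \near (1 : R), dilation u r (dilation u m K) s.
  move=> sS [Ks su]; apply: near1_dilation_interior.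
  by apply: contrapT => ns; apply: nx; exists s.
have [r /andP[r0 r1] keeps_r] := near1_below (filter_forall_seq near_keeps).
have Erm : E (r * m).
  split; first by rewrite mulr_gt0 //= (le_trans _ m_le1) // ler_piMl // ltW.
  move=> s sS Ks; have [->|su] := pselect (s = u); first exact: dilation_center.
  by rewrite -dilation_comp; apply: keeps_r.
by have := ge_inf E_lbound Erm; rewrite lt_geF // gtr_pMl.
Qed.

Lemma shrink_to_boundary : exists2 m, 0 < m <= 1 &
  (forall s, s \in S -> K s -> dilation u m K s) /\
  exists x, [/\ x \in S, K x, x <> u & ~ (dilation u m K)° x].
Proof.
by exists m; [rewrite m_gt0 m_le1 | split; [exact: keeps_m | exact: boundary_point]].
Qed.

End ShrinkToBoundary.

(* After shrinking K about u until x reaches the boundary, a slight enlargement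
   about x puts every other point in the interior (strict convexity) while x
   stays on the boundary and no new point of S comes in; a slight shrinking
   about u then expels x alone. *)
Lemma remove_one_point {K} {S : seq P} {u s0} : compact K -> strictly_convex_set K ->
  K u -> s0 \in S -> K s0 -> s0 <> u ->
  exists x, [/\ x \in S, K x, x <> u & exists t w, 0 < t /\
    forall s, s \in S -> (homothet K t w s <-> K s /\ s <> x)].
Proof.
move=> cK sK Ku s0S Ks0 s0u.
have [m /andP[m0 m1] [keeps [x [xS Kx xu nx]]]] := shrink_to_boundary cK Ku s0S Ks0 s0u.
set H1 := dilation u m K.
have cH1 : compact H1 by apply: compact_homothet.
have sH1 : strictly_convex_set H1 by apply: strictly_convex_homothet.
have near_out s : s \in S -> ~ H1 s -> \forall r \near (1 : R), ~ dilation x r H1 s.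
  by move=> _; apply: near1_dilation_closed; apply: compact_closed cH1.
have [r r1 enlarge] := near1_above (filter_forall_seq near_out).
have r0 : 0 < r by apply: lt_trans r1.
set E2 := dilation x r H1.
have sE2 : strictly_convex_set E2 by apply: strictly_convex_homothet.
have E2x : E2 x by apply/dilation_center/keeps.
have nE2x : ~ E2° x by move/(interior_dilation_center r0).
have H1E2 : H1 = dilation x r^-1 E2 by rewrite /E2 dilation_comp mulVf ?lt0r_neq0 ?dilation1.
have r'01 : 0 < r^-1 < 1 by rewrite invr_gt0 r0 invf_lt1.
have E2u : E2 u.
  have : H1 u by apply: dilation_center.
  rewrite H1E2; apply: (dilation_sub (strictly_convex_convex sE2) E2x).
  by case/andP: r'01 => ? ?; rewrite !ltW.
have near_in s : s \in S -> K s /\ s <> x -> \forall d \near (1 : R), dilation u d E2 s.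
  move=> sS [Ks sx]; apply/near1_dilation_interior/(interior_dilation sE2 E2x r'01) => //.
  by rewrite -H1E2; apply: keeps.
have [d d01 shrink] := near1_below (filter_forall_seq near_in).
have d0 : 0 <= d <= 1 by case/andP: d01 => *; rewrite !ltW.
have [t [w [t0 Fhom]]] : exists t w, 0 < t /\ dilation u d E2 = homothet K t w.
  rewrite /E2 /H1 /dilation !homothet_comp; do 2!eexists; split; last reflexivity.
  by case/andP: d01 => *; rewrite !mulr_gt0.
exists x; split => //; exists t, w; split => // s sS; rewrite -Fhom.
split=> [Fs|[Ks sx]]; last exact: shrink.
have E2s : E2 s by apply: dilation_sub (strictly_convex_convex sE2) E2u d0 _ Fs.
have H1s : H1 s by apply: contrapT => nH1s; apply: enlarge nH1s E2s.
split; first by apply: dilation_sub (strictly_convex_convex sK) Ku _ _ H1s; rewrite (ltW m0).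
by move=> sx; apply: nE2x; rewrite -sx; apply: interior_dilation sE2 E2u d01 Fs _; rewrite sx.
Qed.

Definition points_in (S : seq P) K := [set s | s \in S /\ K s].

Lemma points_in_connected {e : P -> P -> Prop} {K} {S : seq P} {a b c} :
  compact K -> strictly_convex_set K ->
  (forall z t w, z \in S -> K z -> 0 < t ->
    (forall s, s \in S -> (homothet K t w s <-> K s /\ s <> z)) ->
    rt_connected e (points_in S (homothet K t w))) ->
  points_in S K a -> points_in S K b -> points_in S K c -> a <> b -> a <> c -> b <> c ->
  rt_connected e (points_in S K).
Proof.
move=> cK sK conn [aS Ka] [bS Kb] SKc ab ac bc.
have [x1 [x1S Kx1 x1a [t1 [w1 [t10 K1]]]]] := remove_one_point cK sK Ka bS Kb (nesym ab).
have [x2 [x2S Kx2 x2x1 [t2 [w2 [t20 K2]]]]] := remove_one_point cK sK Kx1 aS Ka (nesym x1a).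
have [w SKw [wx1 wx2]] :=
  exists_avoid2 (A := points_in S K) x1 x2 (conj aS Ka) (conj bS Kb) SKc ab ac bc.
apply: (rt_connected_cover _ _ (nesym x2x1) SKw wx1 wx2 (conn _ _ _ x1S Kx1 t10 K1)
  (conn _ _ _ x2S Kx2 t20 K2)).
- by move=> p [pS Kp] px1; split => //; apply/K1.
- by move=> p [pS Kp] px2; split => //; apply/K2.
Qed.

Definition delaunay_edge_in C (S : seq P) (D : set P) a b :=
  delaunay_adj C S a b /\ segment a b `<=` D.

Section DelaunayPaths.
Variables (C : set P) (S : seq P) (lam : R) (x : P).
Hypotheses (cC : compact C) (sC : strictly_convex_set C) (lam0 : 0 < lam).

Local Notation edge := (delaunay_edge_in C S (homothet C lam x)).

Lemma homothet_points_connected n mu y : 0 < mu ->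
  points_in S (homothet C mu y) `<=` homothet C lam x ->
  (count (fun s => `[< homothet C mu y s >]) S <= n)%N ->
  rt_connected edge (points_in S (homothet C mu y)).
Proof.
elim: n mu y => [|n IH] mu y mu0 KC' cnt a b [aS Ka] [bS Kb].
  suff : (0 < count (fun s => `[< homothet C mu y s >]) S)%N by rewrite lt0n -leqn0 cnt.
  by rewrite -has_count; apply/hasP; exists a => //; apply/asboolP.
set K := homothet C mu y in KC' cnt Ka Kb *.
have [<-|ab] := pselect (a = b); first exact: rt_refl.
have [[c [cS Kc ca cb]]|nc] := pselect (exists c, [/\ c \in S, K c, c <> a & c <> b]).
  have cK : compact K by apply: compact_homothet.
  have sK : strictly_convex_set K by apply: strictly_convex_homothet.
  apply: (points_in_connected cK sK _ (conj aS Ka) (conj bS Kb) (conj cS Kc) ab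
    (nesym ca) (nesym cb) _ _ (conj aS Ka) (conj bS Kb)).
  move=> z t w zS Kz t0 Ktw.
  have lt_cnt : (count (fun s => `[< homothet K t w s >]) S <
                 count (fun s => `[< K s >]) S)%N.
    apply: count_lt_remove zS _ => [s sS|]; last exact/asboolP.
    by apply/asboolP/andP; rewrite Ktw // => -[Ks /eqP sz]; split=> //; apply/asboolP.
  rewrite /K homothet_comp in lt_cnt *; apply: IH; first exact: mulr_gt0.
    by move=> s [sS]; rewrite -homothet_comp => /(Ktw s sS)[Ks _]; apply: KC'.
  by rewrite -ltnS; apply: leq_trans cnt.
apply: rt_step; split.
  split=> //; exists mu, y; do 3!split=> //; move=> r rS Kr.
  have [ra|ra] := pselect (r = a); [by left | right].
  by apply: contrapT => rb; apply: nc; exists r.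
have convC' := strictly_convex_convex (strictly_convex_homothet C lam x lam0 sC).
by apply: convC'; apply: KC'.
Qed.

End DelaunayPaths.

End Homothety.

Theorem mainTheorem18 (R : realType) (C : set (pt R)) (S : seq (pt R))
    (lam : R) (x : pt R) (p q : pt R) :
  strictly_convex_body C ->
  uniq S ->
  general_position C S ->
  0 < lam ->
  p \in S -> q \in S -> p <> q ->
  (forall r, r \in S -> (boundary (homothet C lam x) r <-> (r = p \/ r = q))) ->
  exists vs : seq (pt R),
    last p vs = q /\
    forall i : nat, (i < size vs)%N ->
      delaunay_adj C S (nth p (p :: vs) i) (nth p (p :: vs) i.+1) /\
      segment (nth p (p :: vs) i) (nth p (p :: vs) i.+1) `<=` homothet C lam x.
Proof.
move=> Cbody _ _ lam0 pS qS _ bdC'.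
have [[_ cC _] _] := Cbody.
have C'_closed := compact_closed (@norm_hausdorff _ _) (compact_homothet C lam x cC).
have C'S r : r \in S -> r = p \/ r = q -> homothet C lam x r.
  by move=> rS /(bdC' r rS)[clr _]; apply: C'_closed.
have conn := homothet_points_connected C S lam x cC (strictly_convex_body_set Cbody) lam0
  (size S) lam x lam0 (fun s => @proj2 _ _) (count_size _ S).
have [vs pvs] := clos_refl_trans_path
  (conn p q (conj pS (C'S p pS (or_introl erefl))) (conj qS (C'S q qS (or_intror erefl)))).
by exists vs.
Qed.
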